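(* Let $h(t),\beta(t)$ be arbitrary smooth functions on an interval $I$ and $a,b,c,s$ real constants. Let $\Lambda(t)$ be an antiderivative of $\beta(t)-ah(t)$, fix $t_0\in I$, and set $$q(t)=e^{2\Lambda(t)}\Big((2a-b)s\int_{t_0}^te^{-2\Lambda(\tau)}\,d\tau+c\Big),$$ so that $q'=2(\beta-ah)q+(2a-b)s$. Define $$u=asyz+(\beta-ah)x,\quad v=-\beta y,\quad w=ahz,$$ $$H^1=ayz\,q(t)+\Big(\frac b2-a\Big)x,\quad H^2=-\frac b2y,\quad H^3=az,$$ $$p=-\rho\Big((\beta'-ah'+(\beta-ah)^2)\frac{x^2}{2}+(\beta^2-\beta')\frac{y^2}{2}+(ah'+a^2h^2)\frac{z^2}{2}-\mu_0a^2q^2\frac{y^2z^2}{2}-\mu_0aq\Big(\frac b2-a\Big)xyz\Big)+\theta(t),$$ with $\theta$ arbitrary. Then $\mathbf v=(u,v,w)^t$, $\mathbf H=(H^1,H^2,H^3)^t$ and $p$ solve the MHD system on $I\times\mathbb R^3$.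
   Context: Throughout, $\nu,\eta,\mu_0,\rho$ are positive constants. The MHD system for $\mathbf v=(u,v,w)^t$, $\mathbf H=(H^1,H^2,H^3)^t$, $p$, functions of $(t,x,y,z)$, is $$\nabla\cdot\mathbf v=0,\quad \mathbf v_t+(\mathbf v\cdot\nabla)\mathbf v-\mu_0(\mathbf H\times\operatorname{rot}\mathbf H)+\tfrac1\rho\nabla p=\nu\Delta\mathbf v,\quad \nabla\cdot\mathbf H=0,\quad \mathbf H_t=\operatorname{rot}(\mathbf v\times\mathbf H)+\eta\Delta\mathbf H,$$ with $\operatorname{rot}$ the curl and $\Delta$ the componentwise Laplacian in $(x,y,z)$. A prime denotes $d/dt$. *)

From Stdlib Require Import Reals Lra Classical ClassicalEpsilon.
Open Scope R_scope.

Definition is_open_interval (I : R -> Prop) : Prop :=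
  (exists t, I t) /\
  (forall x y z, I x -> I z -> x <= y <= z -> I y) /\
  (forall t, I t -> exists e, 0 < e /\ forall s, Rabs (s - t) < e -> I s).

(** Classical derivative: the derivative of g at x if it exists, 0 otherwise. *)
Definition Deriv (g : R -> R) (x : R) : R :=
  match excluded_middle_informative (exists l, derivable_pt_lim g x l) with
  | left H => proj1_sig (constructive_indefinite_description _ H)
  | right _ => 0
  end.

Definition ex_deriv (g : R -> R) (x : R) : Prop := exists l, derivable_pt_lim g x l.

Definition smooth_on (I : R -> Prop) (f : R -> R) : Prop :=
  exists D : nat -> R -> R,
    (forall t, D O t = f t) /\
    (forall n t, I t -> derivable_pt_lim (D n) t (D (S n) t)).

(** Riemann integral int_a^b f (oriented), 0 if f is not Riemann integrable. *)
Definition integral (f : R -> R) (a b : R) : R :=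
  match excluded_middle_informative (exists pr : Riemann_integrable f a b, True) with
  | left H => RiemannInt (proj1_sig (constructive_indefinite_description _ H))
  | right _ => 0
  end.

(** Fields: functions of (t, x, y, z). *)
Definition Fld := R -> R -> R -> R -> R.

Definition pd_t (f : Fld) : Fld := fun t x y z => Deriv (fun s => f s x y z) t.
Definition pd_x (f : Fld) : Fld := fun t x y z => Deriv (fun s => f t s y z) x.
Definition pd_y (f : Fld) : Fld := fun t x y z => Deriv (fun s => f t x s z) y.
Definition pd_z (f : Fld) : Fld := fun t x y z => Deriv (fun s => f t x y s) z.

Definition ex_pd_t (f : Fld) t x y z := ex_deriv (fun s => f s x y z) t.
Definition ex_pd_x (f : Fld) t x y z := ex_deriv (fun s => f t s y z) x.
Definition ex_pd_y (f : Fld) t x y z := ex_deriv (fun s => f t x s z) y.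
Definition ex_pd_z (f : Fld) t x y z := ex_deriv (fun s => f t x y s) z.

Definition lap (f : Fld) : Fld := fun t x y z =>
  pd_x (pd_x f) t x y z + pd_y (pd_y f) t x y z + pd_z (pd_z f) t x y z.

Definition reg_field (f : Fld) t x y z : Prop :=
  ex_pd_t f t x y z /\ ex_pd_x f t x y z /\ ex_pd_y f t x y z /\ ex_pd_z f t x y z /\
  ex_pd_x (pd_x f) t x y z /\ ex_pd_y (pd_y f) t x y z /\ ex_pd_z (pd_z f) t x y z.

Definition MHD_solution (I : R -> Prop) (nu eta mu0 rho : R)
  (u v w H1 H2 H3 p : Fld) : Prop :=
  forall t x y z, I t ->
  let Ux := pd_x u t x y z in let Uy := pd_y u t x y z in let Uz := pd_z u t x y z in
  let Vx := pd_x v t x y z in let Vy := pd_y v t x y z in let Vz := pd_z v t x y z in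
  let Wx := pd_x w t x y z in let Wy := pd_y w t x y z in let Wz := pd_z w t x y z in
  let R1 := pd_y H3 t x y z - pd_z H2 t x y z in
  let R2 := pd_z H1 t x y z - pd_x H3 t x y z in
  let R3 := pd_x H2 t x y z - pd_y H1 t x y z in
  let h1 := H1 t x y z in let h2 := H2 t x y z in let h3 := H3 t x y z in
  let uu := u t x y z in let vv := v t x y z in let ww := w t x y z in
  let E1 : Fld := fun t x y z => v t x y z * H3 t x y z - w t x y z * H2 t x y z in
  let E2 : Fld := fun t x y z => w t x y z * H1 t x y z - u t x y z * H3 t x y z in
  let E3 : Fld := fun t x y z => u t x y z * H2 t x y z - v t x y z * H1 t x y z in
  (reg_field u t x y z /\ reg_field v t x y z /\ reg_field w t x y z /\
   reg_field H1 t x y z /\ reg_field H2 t x y z /\ reg_field H3 t x y z /\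
   ex_pd_x p t x y z /\ ex_pd_y p t x y z /\ ex_pd_z p t x y z) /\
  Ux + Vy + Wz = 0 /\
  pd_t u t x y z + (uu * Ux + vv * Uy + ww * Uz) - mu0 * (h2 * R3 - h3 * R2)
    + / rho * pd_x p t x y z = nu * lap u t x y z /\
  pd_t v t x y z + (uu * Vx + vv * Vy + ww * Vz) - mu0 * (h3 * R1 - h1 * R3)
    + / rho * pd_y p t x y z = nu * lap v t x y z /\
  pd_t w t x y z + (uu * Wx + vv * Wy + ww * Wz) - mu0 * (h1 * R2 - h2 * R1)
    + / rho * pd_z p t x y z = nu * lap w t x y z /\
  pd_x H1 t x y z + pd_y H2 t x y z + pd_z H3 t x y z = 0 /\
  pd_t H1 t x y z = (pd_y E3 t x y z - pd_z E2 t x y z) + eta * lap H1 t x y z /\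
  pd_t H2 t x y z = (pd_z E1 t x y z - pd_x E3 t x y z) + eta * lap H2 t x y z /\
  pd_t H3 t x y z = (pd_x E2 t x y z - pd_y E1 t x y z) + eta * lap H3 t x y z.

(* All fields of the theorem are polynomials in (x, y, z) whose coefficients
   depend on t only through h, beta, their derivatives, and the function q.
   The proof therefore has two parts.
   - Analysis in time: the coefficient q is a variation-of-constants formula,
     q = e^{2 Lambda} ((2a - b) s \int_{t0}^t e^{-2 Lambda} + c), and by the
     fundamental theorem of calculus on the open interval I it satisfies the
     linear ODE  q' = 2 (beta - a h) q + (2a - b) s  (lemma [variation_of_constants]).
   - Calculus in space: every partial derivative occurring in the MHD system
     is computed symbolically with the rules of [derivable_pt_lim] (tactic
     [dlim]), and [Deriv] is replaced by these values ([Deriv_eq]).  After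
     substituting q' by the ODE, each equation becomes a rational identity in
     t, x, y, z, closed by [field]. *)

From Stdlib Require Import Reals Lra FunctionalExtensionality ClassicalEpsilon.
From Coquelicot Require Import Coquelicot.
Open Scope R_scope.

Lemma Deriv_eq (g : R -> R) (x l : R) : derivable_pt_lim g x l -> Deriv g x = l.
Proof.
  intro Hg. unfold Deriv. destruct excluded_middle_informative as [Hex | Hnex].
  - destruct constructive_indefinite_description as [l' Hl']. simpl.
    exact (uniqueness_limite _ _ _ _ Hl' Hg).
  - exfalso; apply Hnex; exists l; exact Hg.
Qed.

Lemma smooth_derivable (I : R -> Prop) (f : R -> R) :
  smooth_on I f -> forall t, I t -> derivable_pt_lim f t (Deriv f t).
Proof.
  intros [D [HD0 HDS]] t Ht.
  assert (Hf : D O = f) by (extensionality u; apply HD0).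
  pose proof (HDS O t Ht) as Hd. rewrite Hf in Hd.
  rewrite (Deriv_eq _ _ _ Hd). exact Hd.
Qed.

(* The rules below are the standard ones, stated
   with the function given as a lambda-term so that [dlim] can match them on
   the syntax of the function to be differentiated. *)

Lemma dl_plus (f g : R -> R) (x l1 l2 : R) :
  derivable_pt_lim f x l1 -> derivable_pt_lim g x l2 ->
  derivable_pt_lim (fun s => f s + g s) x (l1 + l2).
Proof. apply derivable_pt_lim_plus. Qed.

Lemma dl_minus (f g : R -> R) (x l1 l2 : R) :
  derivable_pt_lim f x l1 -> derivable_pt_lim g x l2 ->
  derivable_pt_lim (fun s => f s - g s) x (l1 - l2).
Proof. apply derivable_pt_lim_minus. Qed.

Lemma dl_mult (f g : R -> R) (x l1 l2 : R) :
  derivable_pt_lim f x l1 -> derivable_pt_lim g x l2 ->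
  derivable_pt_lim (fun s => f s * g s) x (l1 * g x + f x * l2).
Proof. apply derivable_pt_lim_mult. Qed.

Lemma dl_opp (f : R -> R) (x l : R) :
  derivable_pt_lim f x l -> derivable_pt_lim (fun s => - f s) x (- l).
Proof. apply derivable_pt_lim_opp. Qed.

Lemma dl_div_const (f : R -> R) (c x l : R) :
  derivable_pt_lim f x l -> derivable_pt_lim (fun s => f s / c) x (l / c).
Proof.
  intro Hf. replace (l / c) with (l * (fun _ => / c) x + f x * 0) by (cbv beta; unfold Rdiv; ring).
  apply (dl_mult f (fun _ => / c)); [exact Hf | apply derivable_pt_lim_const].
Qed.

Lemma dl_square (f : R -> R) (x l : R) :
  derivable_pt_lim f x l -> derivable_pt_lim (fun s => f s ^ 2) x (2 * f x * l).
Proof.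
  intro Hf. replace (2 * f x * l) with (l * f x + f x * l) by ring.
  replace (fun s => f s ^ 2) with (fun s => f s * f s) by (extensionality u; ring).
  exact (dl_mult f f x l l Hf Hf).
Qed.

Lemma dl_exp (f : R -> R) (x l : R) :
  derivable_pt_lim f x l -> derivable_pt_lim (fun s => exp (f s)) x (exp (f x) * l).
Proof. intro Hf. apply (derivable_pt_lim_comp f exp); [exact Hf | apply derivable_pt_lim_exp]. Qed.

Lemma dl_Deriv (G G' : R -> R) (x l : R) :
  (forall s, derivable_pt_lim G s (G' s)) -> derivable_pt_lim G' x l ->
  derivable_pt_lim (fun s => Deriv G s) x l.
Proof.
  intros HG HG'. replace (fun s => Deriv G s) with G'; [exact HG' |].
  extensionality u. symmetry; apply Deriv_eq, HG.
Qed.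

Lemma dl_value (f : R -> R) (x l1 l2 : R) :
  derivable_pt_lim f x l1 -> l1 = l2 -> derivable_pt_lim f x l2.
Proof. intros Hf E; rewrite <- E; exact Hf. Qed.

(* [dlim] proves [derivable_pt_lim f x ?l] by structural recursion on f,
   using hypotheses for the derivatives of the unknown functions of t. *)
Ltac dlim := lazymatch goal with
| |- derivable_pt_lim (fun _ => ?c) _ _ => apply derivable_pt_lim_const
| |- derivable_pt_lim (fun s => s) _ _ => apply derivable_pt_lim_id
| |- derivable_pt_lim (fun s => @?f s + @?g s) _ _ => apply (dl_plus f g); [dlim | dlim]
| |- derivable_pt_lim (fun s => @?f s - @?g s) _ _ => apply (dl_minus f g); [dlim | dlim]
| |- derivable_pt_lim (fun s => @?f s * @?g s) _ _ => apply (dl_mult f g); [dlim | dlim]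
| |- derivable_pt_lim (fun s => - @?f s) _ _ => apply (dl_opp f); dlim
| |- derivable_pt_lim (fun s => @?f s / ?c) _ _ => apply (dl_div_const f c); dlim
| |- derivable_pt_lim (fun s => @?f s ^ 2) _ _ => apply (dl_square f); dlim
| |- derivable_pt_lim (fun s => exp (@?f s)) _ _ => apply (dl_exp f); dlim
| |- derivable_pt_lim (fun s => Deriv ?G s) _ _ => eapply (dl_Deriv G); [intro; dlim | dlim]
| _ => eassumption
end.

Ltac compute_Derivs := repeat match goal with
| |- context [Deriv ?g ?x] =>
    let E := fresh in
    eassert (E : Deriv g x = _) by (apply Deriv_eq; dlim); rewrite E; clear E
end.

Lemma open_interval_locally (I : R -> Prop) :
  is_open_interval I -> forall t, I t -> locally t I.
Proof.
  intros [_ [_ Hopen]] t Ht. destruct (Hopen t Ht) as [e [He Hball]].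
  exists (mkposreal e He). intros u Hu. apply Hball. exact Hu.
Qed.

Lemma ex_RInt_open_interval (I : R -> Prop) (f : R -> R) :
  is_open_interval I -> (forall x, I x -> continuous f x) ->
  forall u v, I u -> I v -> ex_RInt f u v.
Proof.
  intros [_ [Hconvex _]] Hf u v Hu Hv. apply (ex_RInt_continuous (V := R_CompleteNormedModule)).
  intros z Hz. apply Hf, (Hconvex (Rmin u v) z (Rmax u v)); auto.
  - apply Rmin_case; assumption.
  - apply Rmax_case; assumption.
Qed.

Lemma integral_RInt (f : R -> R) (a b : R) :
  ex_RInt f a b -> integral f a b = RInt f a b.
Proof.
  intro Hf. pose proof (ex_RInt_Reals_0 f a b Hf) as pr.
  rewrite (RInt_Reals f a b pr). unfold integral.
  destruct excluded_middle_informative as [Hex | Hnex].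
  - destruct constructive_indefinite_description as [pr' Htriv]. apply RiemannInt_P5.
  - exfalso; apply Hnex; exists pr; exact Logic.I.
Qed.

Lemma ftc_open_interval (I : R -> Prop) (f : R -> R) (t0 t : R) :
  is_open_interval I -> (forall x, I x -> continuous f x) -> I t0 -> I t ->
  derivable_pt_lim (fun u => integral f t0 u) t (f t).
Proof.
  intros HI Hf Ht0 Ht. apply is_derive_Reals.
  assert (Hint : forall u, I u -> ex_RInt f t0 u)
    by (intros u Hu; exact (ex_RInt_open_interval I f HI Hf t0 u Ht0 Hu)).
  apply is_derive_ext_loc with (f := fun u => RInt f t0 u).
  - apply (filter_imp I); [| exact (open_interval_locally I HI t Ht)].
    intros u Hu. symmetry. apply integral_RInt, Hint, Hu.
  - apply (is_derive_RInt f _ t0 t); [| exact (Hf t Ht)].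
    apply (filter_imp I); [| exact (open_interval_locally I HI t Ht)].
    intros u Hu. apply (RInt_correct (V := R_CompleteNormedModule)), Hint, Hu.
Qed.

Lemma variation_of_constants (I : R -> Prop) (L g : R -> R) (k c t0 : R) :
  is_open_interval I -> (forall t, I t -> derivable_pt_lim L t (g t)) -> I t0 ->
  let q := fun t => exp (2 * L t) * (k * integral (fun tau => exp (- (2 * L tau))) t0 t + c) in
  forall t, I t -> derivable_pt_lim q t (2 * g t * q t + k).
Proof.
  intros HI HL Ht0 q t Ht.
  assert (Hcont : forall x, I x -> continuous (fun tau => exp (- (2 * L tau))) x).
  { intros x Hx. apply (ex_derive_continuous (K := R_AbsRing) (V := R_NormedModule)).
    eexists. apply is_derive_Reals.
    pose proof (HL x Hx). dlim. }
  pose proof (ftc_open_interval I _ t0 t HI Hcont Ht0 Ht) as Hprim.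
  pose proof (HL t Ht) as HLt.
  eapply dl_value; [unfold q; dlim |].
  (* e^{2L} e^{-2L} = 1 turns the derivative of the product into the ODE. *)
  unfold q. rewrite exp_Ropp. field. apply Rgt_not_eq, exp_pos.
Qed.

Theorem theorem3p1
  (nu eta mu0 rho : R) (Hnu : 0 < nu) (Heta : 0 < eta) (Hmu0 : 0 < mu0) (Hrho : 0 < rho)
  (I : R -> Prop) (HI : is_open_interval I)
  (h beta : R -> R) (Hh : smooth_on I h) (Hbeta : smooth_on I beta)
  (a b c s : R)
  (Lambda : R -> R)
  (HLambda : forall t, I t -> derivable_pt_lim Lambda t (beta t - a * h t))
  (t0 : R) (Ht0 : I t0)
  (theta : R -> R) :
  let q : R -> R := fun t =>
    exp (2 * Lambda t) *
    ((2 * a - b) * s * integral (fun tau => exp (- (2 * Lambda tau))) t0 t + c) in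
  let dh := Deriv h in
  let dbeta := Deriv beta in
  MHD_solution I nu eta mu0 rho
    (fun t x y z => a * s * y * z + (beta t - a * h t) * x)
    (fun t x y z => - beta t * y)
    (fun t x y z => a * h t * z)
    (fun t x y z => a * y * z * q t + (b / 2 - a) * x)
    (fun t x y z => - (b / 2) * y)
    (fun t x y z => a * z)
    (fun t x y z =>
       - rho * ((dbeta t - a * dh t + (beta t - a * h t) ^ 2) * (x ^ 2 / 2)
               + (beta t ^ 2 - dbeta t) * (y ^ 2 / 2)
               + (a * dh t + a ^ 2 * h t ^ 2) * (z ^ 2 / 2)
               - mu0 * a ^ 2 * q t ^ 2 * (y ^ 2 * z ^ 2 / 2)
               - mu0 * a * q t * (b / 2 - a) * (x * y * z))
       + theta t).
Proof.
  intros q dh dbeta t x y z Ht.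
  pose proof (variation_of_constants I Lambda (fun t => beta t - a * h t)
                ((2 * a - b) * s) c t0 HI HLambda Ht0 t Ht) as Hq.
  pose proof (smooth_derivable I h Hh t Ht) as Hh'.
  pose proof (smooth_derivable I beta Hbeta t Ht) as Hbeta'.
  fold q in Hq; fold dh in Hh'; fold dbeta in Hbeta'; cbv beta in Hq.
  cbv zeta.
  unfold reg_field, ex_pd_t, ex_pd_x, ex_pd_y, ex_pd_z, ex_deriv, lap, pd_t, pd_x, pd_y, pd_z.
  cbv beta. compute_Derivs.
  repeat split; try (eexists; dlim).
  all: field; lra.
Qed.
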